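(* The function $$u(z)=3\frac{(1-|z|^2)^4}{|1-z|^2}+3\frac{(1-|z|^2)^5}{|1-z|^4}-\frac{3}{2}\frac{(1-|z|^2)^4}{|1-z|^4}+\frac{(1-|z|^2)^6}{|1-z|^6},\quad z\in\mathbb{D},$$ is $w_2$-biharmonic in $\mathbb{D}$, i.e. $\Delta\big((1-|z|^2)^{-2}\Delta u\big)=0$ in $\mathbb{D}$.
   Context: $\mathbb{D}$ is the open unit disc and $\Delta=\partial^2/\partial z\partial\bar z$. The weight is $w_2(z)=(1-|z|^2)^2$, and $u$ is called $w_2$-biharmonic if $\Delta w_2^{-1}\Delta u=0$ in $\mathbb{D}$. *)

From Stdlib Require Import Reals Lra.
From Coquelicot Require Import Coquelicot.
Open Scope R_scope.

(* Functions on the plane, z = x + i y. *)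
(* Delta = d^2/(dz d zbar) = (1/4)(d^2/dx^2 + d^2/dy^2). *)
Definition lapz (f : R -> R -> R) (x y : R) : R :=
  (Derive (fun t => Derive (fun s => f s y) t) x
   + Derive (fun t => Derive (fun s => f x s) t) y) / 4.

Definition absz2 (x y : R) : R := x ^ 2 + y ^ 2.
Definition abs1mz2 (x y : R) : R := (1 - x) ^ 2 + y ^ 2.

Definition w2 (x y : R) : R := (1 - absz2 x y) ^ 2.

Definition u_w2 (x y : R) : R :=
  3 * (1 - absz2 x y) ^ 4 / abs1mz2 x y
  + 3 * (1 - absz2 x y) ^ 5 / (abs1mz2 x y) ^ 2
  - 3 / 2 * (1 - absz2 x y) ^ 4 / (abs1mz2 x y) ^ 2
  + (1 - absz2 x y) ^ 6 / (abs1mz2 x y) ^ 3.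

(* Write s = 1 - |z|^2 and q = |1 - z|^2, so that u = F(s, q) is rational in s and
   q.  The chain rule, with |grad s|^2 = 4(1 - s), |grad q|^2 = 4q and
   grad s . grad q = 2(s - q), turns Delta u into a rational function of s and q,
   and it turns out to be  w_2 (9 - 18 Re (1 - z)^-4).  The quotient
   Delta u / w_2 is therefore the real part of a function holomorphic in the disc,
   hence harmonic.  Since [lapz] is built from [Derive], which only sees a
   neighbourhood, it suffices to know the partial derivatives on the open slices of
   the disc. *)

From Stdlib Require Import Reals Lra.
From Coquelicot Require Import Coquelicot.
Open Scope R_scope.

Section LaplacianOnSlicewiseOpen.

Variable D : R -> R -> Prop.
Hypothesis D_open_x : forall y, open (fun t => D t y).
Hypothesis D_open_y : forall x, open (fun t => D x t).

Lemma Derive2_loc (P : R -> Prop) (f f' : R -> R) (f'' x : R) :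
  open P -> P x -> (forall t, P t -> is_derive f t (f' t)) -> is_derive f' x f'' ->
  Derive (fun t => Derive f t) x = f''.
Proof.
intros HP Px Hf Hf'. apply is_derive_unique.
apply is_derive_ext_loc with (f := f'); [|exact Hf'].
apply (filter_imp P); [|exact (HP x Px)].
intros t Pt. symmetry. now apply is_derive_unique, Hf.
Qed.

Lemma Derive2_ext_loc (P : R -> Prop) (f g : R -> R) (x : R) :
  open P -> P x -> (forall t, P t -> f t = g t) ->
  Derive (fun t => Derive f t) x = Derive (fun t => Derive g t) x.
Proof.
intros HP Px Hfg. apply Derive_ext_loc.
apply (filter_imp P); [|exact (HP x Px)].
intros t Pt. apply Derive_ext_loc.
apply (filter_imp P); [exact Hfg|exact (HP t Pt)].
Qed.

Lemma lapz_ext (f g : R -> R -> R) (x y : R) :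
  (forall a b, D a b -> f a b = g a b) -> D x y -> lapz f x y = lapz g x y.
Proof.
intros Hfg Hxy. unfold lapz.
rewrite (Derive2_ext_loc (fun t => D t y) (fun s => f s y) (fun s => g s y) x)
  by auto.
now rewrite (Derive2_ext_loc (fun t => D x t) (fun s => f x s) (fun s => g x s) y)
  by auto.
Qed.

Lemma lapz_partials (f fx fxx fy fyy : R -> R -> R) (x y : R) :
  (forall a b, D a b -> is_derive (fun s => f s b) a (fx a b)) ->
  (forall a b, D a b -> is_derive (fun s => fx s b) a (fxx a b)) ->
  (forall a b, D a b -> is_derive (fun s => f a s) b (fy a b)) ->
  (forall a b, D a b -> is_derive (fun s => fy a s) b (fyy a b)) ->
  D x y -> lapz f x y = (fxx x y + fyy x y) / 4.
Proof.
intros Hx Hxx Hy Hyy Hxy. unfold lapz.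
rewrite (Derive2_loc (fun t => D t y) _ (fun t => fx t y) (fxx x y)) by auto.
now rewrite (Derive2_loc (fun t => D x t) _ (fun t => fy x t) (fyy x y)) by auto.
Qed.

End LaplacianOnSlicewiseOpen.

Lemma open_lt_of_ex_derive (h : R -> R) :
  (forall t, ex_derive h t) -> open (fun t => h t < 1).
Proof.
intros Hh. apply (open_comp h (fun v => v < 1)); [|apply open_lt].
intros t _. apply (ex_derive_continuous (K := R_AbsRing) (V := R_NormedModule)), Hh.
Qed.

Lemma disc_open_x (y : R) : open (fun t => absz2 t y < 1).
Proof. apply open_lt_of_ex_derive. intros t. unfold absz2. auto_derive. exact I. Qed.

Lemma disc_open_y (x : R) : open (fun t => absz2 x t < 1).
Proof. apply open_lt_of_ex_derive. intros t. unfold absz2. auto_derive. exact I. Qed.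

Lemma abs1mz2_neq0 (x y : R) : absz2 x y < 1 -> abs1mz2 x y <> 0.
Proof. unfold absz2, abs1mz2. nra. Qed.

Lemma w2_neq0 (x y : R) : absz2 x y < 1 -> w2 x y <> 0.
Proof. unfold w2. intros H. apply pow_nonzero. lra. Qed.

(* [cpow a b n] = (a + i b)^n, and
   (1 - z)^-n = (1 - conj z)^n / |1 - z|^(2n) with 1 - conj z = (1 - x) + i y. *)
Fixpoint cpow (a b : R) (n : nat) : R * R :=
  match n with
  | O => (1, 0)
  | S n => let (r, i) := cpow a b n in (a * r - b * i, a * i + b * r)
  end.

Definition re_inv_1mz (n : nat) (x y : R) : R := fst (cpow (1 - x) y n) / abs1mz2 x y ^ n.
Definition im_inv_1mz (n : nat) (x y : R) : R := snd (cpow (1 - x) y n) / abs1mz2 x y ^ n.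

Definition lapu_over_w2 (x y : R) : R := 9 - 18 * re_inv_1mz 4 x y.

(* The partial derivatives of
   F(s, q) = 3 s^4/q + 3 s^5/q^2 - 3/2 s^4/q^2 + s^6/q^3, for which
   u_w2 x y = F (1 - absz2 x y) (abs1mz2 x y); u_x, ..., u_yy below are the chain
   rule with s_x = -2x, q_x = -2(1 - x), s_y = -2y, q_y = 2y. *)
Definition F_s (s q : R) : R := 12 * s ^ 3 / q + 15 * s ^ 4 / q ^ 2 - 6 * s ^ 3 / q ^ 2 + 6 * s ^ 5 / q ^ 3.
Definition F_q (s q : R) : R := - 3 * s ^ 4 / q ^ 2 - 6 * s ^ 5 / q ^ 3 + 3 * s ^ 4 / q ^ 3 - 3 * s ^ 6 / q ^ 4.
Definition F_ss (s q : R) : R := 36 * s ^ 2 / q + 60 * s ^ 3 / q ^ 2 - 18 * s ^ 2 / q ^ 2 + 30 * s ^ 4 / q ^ 3.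
Definition F_sq (s q : R) : R := - 12 * s ^ 3 / q ^ 2 - 30 * s ^ 4 / q ^ 3 + 12 * s ^ 3 / q ^ 3 - 18 * s ^ 5 / q ^ 4.
Definition F_qq (s q : R) : R := 6 * s ^ 4 / q ^ 3 + 18 * s ^ 5 / q ^ 4 - 9 * s ^ 4 / q ^ 4 + 12 * s ^ 6 / q ^ 5.

Definition u_x (x y : R) : R :=
  let s := 1 - absz2 x y in let q := abs1mz2 x y in
  - 2 * x * F_s s q - 2 * (1 - x) * F_q s q.
Definition u_y (x y : R) : R :=
  let s := 1 - absz2 x y in let q := abs1mz2 x y in
  - 2 * y * F_s s q + 2 * y * F_q s q.
Definition u_xx (x y : R) : R :=
  let s := 1 - absz2 x y in let q := abs1mz2 x y in
  4 * x ^ 2 * F_ss s q + 8 * x * (1 - x) * F_sq s q + 4 * (1 - x) ^ 2 * F_qq s q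
  - 2 * F_s s q + 2 * F_q s q.
Definition u_yy (x y : R) : R :=
  let s := 1 - absz2 x y in let q := abs1mz2 x y in
  4 * y ^ 2 * F_ss s q - 8 * y ^ 2 * F_sq s q + 4 * y ^ 2 * F_qq s q
  - 2 * F_s s q + 2 * F_q s q.

Ltac solve_is_derive :=
  let Hq := fresh "Hq" in
  intros Hq;
  unfold u_w2, lapu_over_w2, re_inv_1mz, im_inv_1mz, u_x, u_y, u_xx, u_yy,
    F_s, F_q, F_ss, F_sq, F_qq, absz2, abs1mz2 in *;
  cbn [cpow fst snd];
  auto_derive;
  [ repeat split; repeat apply Rmult_integral_contrapositive_currified;
    try apply R1_neq_R0; intros E; apply Hq; rewrite <- E; ring
  | field; exact Hq ].

Lemma is_derive_u_x (x y : R) : abs1mz2 x y <> 0 ->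
  is_derive (fun t => u_w2 t y) x (u_x x y).
Proof. solve_is_derive. Qed.
Lemma is_derive_u_xx (x y : R) : abs1mz2 x y <> 0 ->
  is_derive (fun t => u_x t y) x (u_xx x y).
Proof. solve_is_derive. Qed.
Lemma is_derive_u_y (x y : R) : abs1mz2 x y <> 0 ->
  is_derive (fun t => u_w2 x t) y (u_y x y).
Proof. solve_is_derive. Qed.
Lemma is_derive_u_yy (x y : R) : abs1mz2 x y <> 0 ->
  is_derive (fun t => u_y x t) y (u_yy x y).
Proof. solve_is_derive. Qed.

(* The constants come from d/dz (1 - z)^-n = n (1 - z)^-(n+1), with d/dx = d/dz and
   d/dy = i d/dz on holomorphic functions. *)
Lemma is_derive_lapu_over_w2_x (x y : R) : abs1mz2 x y <> 0 ->
  is_derive (fun t => lapu_over_w2 t y) x (- 72 * re_inv_1mz 5 x y).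
Proof. solve_is_derive. Qed.
Lemma is_derive_lapu_over_w2_xx (x y : R) : abs1mz2 x y <> 0 ->
  is_derive (fun t => - 72 * re_inv_1mz 5 t y) x (- 360 * re_inv_1mz 6 x y).
Proof. solve_is_derive. Qed.
Lemma is_derive_lapu_over_w2_y (x y : R) : abs1mz2 x y <> 0 ->
  is_derive (fun t => lapu_over_w2 x t) y (72 * im_inv_1mz 5 x y).
Proof. solve_is_derive. Qed.
Lemma is_derive_lapu_over_w2_yy (x y : R) : abs1mz2 x y <> 0 ->
  is_derive (fun t => 72 * im_inv_1mz 5 x t) y (360 * re_inv_1mz 6 x y).
Proof. solve_is_derive. Qed.

Lemma lapz_u_w2 (x y : R) : absz2 x y < 1 -> lapz u_w2 x y = w2 x y * lapu_over_w2 x y.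
Proof.
intros Hxy.
rewrite (lapz_partials _ disc_open_x disc_open_y u_w2 u_x u_xx u_y u_yy x y);
  auto using is_derive_u_x, is_derive_u_xx, is_derive_u_y, is_derive_u_yy, abs1mz2_neq0.
pose proof (abs1mz2_neq0 x y Hxy) as Hq.
unfold u_xx, u_yy, F_s, F_q, F_ss, F_sq, F_qq, w2, lapu_over_w2, re_inv_1mz,
  absz2, abs1mz2 in *.
cbn [cpow fst snd]. field. exact Hq.
Qed.

Lemma lapz_lapu_over_w2 (x y : R) : absz2 x y < 1 -> lapz lapu_over_w2 x y = 0.
Proof.
intros Hxy.
rewrite (lapz_partials _ disc_open_x disc_open_y lapu_over_w2
  (fun a b => - 72 * re_inv_1mz 5 a b) (fun a b => - 360 * re_inv_1mz 6 a b)
  (fun a b => 72 * im_inv_1mz 5 a b) (fun a b => 360 * re_inv_1mz 6 a b) x y);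
  auto using is_derive_lapu_over_w2_x, is_derive_lapu_over_w2_xx,
    is_derive_lapu_over_w2_y, is_derive_lapu_over_w2_yy, abs1mz2_neq0.
lra.
Qed.

Theorem proposition3p1 :
  forall x y : R, absz2 x y < 1 ->
    lapz (fun a b => Rinv (w2 a b) * lapz u_w2 a b) x y = 0.
Proof.
intros x y Hxy.
rewrite (lapz_ext _ disc_open_x disc_open_y _ lapu_over_w2 x y); [|intros a b Hab|exact Hxy].
- exact (lapz_lapu_over_w2 x y Hxy).
- rewrite lapz_u_w2 by exact Hab. field. exact (w2_neq0 a b Hab).
Qed.
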